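(* Consider the problem $\min f(x)$ subject to $g(x)\in\mathcal K$, $x\in\mathcal M$. Let $x^*$ be a feasible point with $M(x^* )\neq\emptyset$ and let $y^*\in M(x^* )$. Then $M(x^* )$ is a singleton if and only if $$\left[Dg(x^* )T_{x^*}\mathcal M\right]^{\perp}\cap\mathcal R_{\mathcal N_{\mathcal K}(g(x^* ))}(y^* )=\{0\}.$$
   Context: $\mathcal M$ is a smooth Riemannian manifold with Riemannian gradient $\operatorname{grad}$; $\mathbb Y$ is a Euclidean space; $f:\mathcal M\to\mathbb R$, $g:\mathcal M\to\mathbb Y$ are twice continuously differentiable; $\mathcal K\subset\mathbb Y$ is a nonempty closed convex set. $Dg(x)$ is the differential of $g$ at $x$, $\mathcal N_{\mathcal K}(u)$ the normal cone of $\mathcal K$ at $u$. The Lagrangian is $L(x;y)=f(x)+\langle y,g(x)\rangle$ and $M(x)=\{y\in\mathbb Y:\operatorname{grad}_xL(x;y)=0,\ y\in\mathcal N_{\mathcal K}(g(x))\}$. For a closed set $\mathcal D$ and $u\in\mathcal D$, the radial cone is $\mathcal R_{\mathcal D}(u)=\{d:\exists t^*>0 \text{ with } u+td\in\mathcal D\ \forall t\in[0,t^*]\}$. Feasible means $g(x^* )\in\mathcal K$. *)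

(* Pointwise model of the problem  min f(x) s.t. g(x) \in K, x \in M
   at the point xs. *)
From HB Require Import structures.
From mathcomp Require Import all_boot all_order all_algebra.
From mathcomp Require Import all_classical all_reals all_analysis.
Set Implicit Arguments. Unset Strict Implicit. Unset Printing Implicit Defensive.
Import Order.TTheory GRing.Theory Num.Theory numFieldNormedType.Exports.
Local Open Scope ring_scope.
Local Open Scope classical_set_scope.

Section Defs.
Variable R : realType.

Definition edot (m : nat) (a b : 'rV[R]_m) : R := (a *m b^T) 0 0.

Definition is_convex (m : nat) (K : set 'rV[R]_m) : Prop :=
  forall a b, K a -> K b -> forall t : R, 0 <= t -> t <= 1 ->
    K (t *: a + (1 - t) *: b).

Definition normal_cone (m : nat) (K : set 'rV[R]_m) (u : 'rV[R]_m)
  : set 'rV[R]_m :=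
  [set y | forall k, K k -> edot y (k - u) <= 0].

Definition radial_cone (m : nat) (D : set 'rV[R]_m) (u : 'rV[R]_m)
  : set 'rV[R]_m :=
  [set d | exists2 ts : R, 0 < ts &
     forall t : R, 0 <= t -> t <= ts -> D (u + t *: d)].

(* Riemannian gradient on the tangent space T_{xs}M = 'rV[R]_n with metric
   <v,w>_G = (v *m G *m w^T) 0 0 (G symmetric positive definite):
   for a linear form  v |-> (v *m l) 0 0  (l : 'cV_n), its gradient is the
   unique w with <w, v>_G = (v *m l) 0 0 for all v, namely l^T G^{-1}. *)
Definition rgrad (n : nat) (G : 'M[R]_n) (l : 'cV[R]_n) : 'rV[R]_n :=
  l^T *m invmx G.

(* grad_x L(xs; y) where Df(xs)[v] = (v *m df) 0 0 and Dg(xs)[v] = v *m Dg: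
   the differential of x |-> f x + <y, g x> at xs is v |-> v *m (df + Dg *m y^T). *)
Definition gradL (n m : nat) (G : 'M[R]_n) (df : 'cV[R]_n) (Dg : 'M[R]_(n, m))
  (y : 'rV[R]_m) : 'rV[R]_n :=
  rgrad G (df + Dg *m y^T).

Definition multipliers (n m : nat) (G : 'M[R]_n) (df : 'cV[R]_n)
  (Dg : 'M[R]_(n, m)) (K : set 'rV[R]_m) (gx : 'rV[R]_m) : set 'rV[R]_m :=
  [set y | gradL G df Dg y = 0 /\ normal_cone K gx y].

Definition range_perp (n m : nat) (Dg : 'M[R]_(n, m)) : set 'rV[R]_m :=
  [set u | forall v : 'rV[R]_n, edot u (v *m Dg) = 0].

End Defs.

(* The multipliers are the points of the normal cone N_K(g(x* )) lying in the
   affine space y* + [Dg(x* ) T_{x* }M]^perp, since grad_x L(x*; y) is affine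
   in y.  A nonzero direction d in the perp space and in the radial cone at
   y* thus yields a second multiplier y* + t d; conversely a second
   multiplier z yields the direction z - y*, which is radial because the
   normal cone is convex. *)
From HB Require Import structures.
From mathcomp Require Import all_boot all_order all_algebra.
From mathcomp Require Import all_classical all_reals all_analysis.
From mathcomp Require Import lra.
Set Implicit Arguments. Unset Strict Implicit. Unset Printing Implicit Defensive.
Import Order.TTheory GRing.Theory Num.Theory numFieldNormedType.Exports.
Local Open Scope ring_scope.
Local Open Scope classical_set_scope.

Section MultiplierSet.
Variable R : realType.
Implicit Types (n m : nat).

Lemma edotDl m (a b c : 'rV[R]_m) : edot (a + b) c = edot a c + edot b c.
Proof. by rewrite /edot mulmxDl mxE. Qed.

Lemma edotZl m (t : R) (a c : 'rV[R]_m) : edot (t *: a) c = t * edot a c.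
Proof. by rewrite /edot -scalemxAl mxE. Qed.

Lemma range_perpE n m (Dg : 'M[R]_(n, m)) u :
  range_perp Dg u <-> Dg *m u^T = 0.
Proof.
split=> [perp_u | Dgu0 v].
- apply: trmx_inj; rewrite trmx_mul trmxK trmx0; apply/rowP => j.
  have := perp_u (delta_mx 0 j).
  by rewrite /edot trmx_mul trmx_delta mulmxA -colE !mxE.
- have uDg0 : u *m Dg^T = 0 by rewrite -[LHS]trmxK trmx_mul trmxK Dgu0 trmx0.
  by rewrite /edot trmx_mul mulmxA uDg0 mul0mx mxE.
Qed.

Lemma range_perpZ n m (Dg : 'M[R]_(n, m)) t u :
  range_perp Dg u -> range_perp Dg (t *: u).
Proof. by rewrite !range_perpE linearZ /= -scalemxAr => ->; rewrite scaler0. Qed.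

Lemma posdef_unitmx n (G : 'M[R]_n) :
  (forall v : 'rV[R]_n, v != 0 -> 0 < (v *m G *m v^T) 0 0) -> G \in unitmx.
Proof.
move=> G_pd; rewrite unitmxE unitfE; apply/negP => /det0P [v v_neq0 vG0].
by have := G_pd v v_neq0; rewrite vG0 mul0mx mxE ltxx.
Qed.

Lemma gradL_eq0 n m (G : 'M[R]_n) df (Dg : 'M[R]_(n, m)) y :
  G \in unitmx -> gradL G df Dg y = 0 <-> df + Dg *m y^T = 0.
Proof.
rewrite /gradL /rgrad => G_unit; split=> [grad0 | ->]; last first.
  by rewrite trmx0 mul0mx.
by apply: trmx_inj; rewrite -(mulmxKV G_unit (df + _)^T) grad0 mul0mx trmx0.
Qed.
Arguments gradL_eq0 {n m G df Dg y}.

Lemma normal_cone_convex m (K : set 'rV[R]_m) u : is_convex (normal_cone K u).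
Proof.
move=> a b Na Nb t t_ge0 t_le1 k Kk; rewrite edotDl !edotZl.
by have := Na k Kk; have := Nb k Kk; nra.
Qed.

Lemma radial_cone0 m (D : set 'rV[R]_m) u : D u -> radial_cone D u 0.
Proof. by move=> Du; exists 1 => // t _ _; rewrite scaler0 addr0. Qed.

Lemma convex_radial_cone m (D : set 'rV[R]_m) u v :
  is_convex D -> D u -> D v -> radial_cone D u (v - u).
Proof.
move=> D_cvx Du Dv; exists 1 => // t t_ge0 t_le1.
have -> : u + t *: (v - u) = t *: v + (1 - t) *: u.
  by rewrite scalerBr scalerBl scale1r addrCA addrC.
exact: D_cvx.
Qed.

Lemma multipliers_shift n m (G : 'M[R]_n) df (Dg : 'M[R]_(n, m))
    (K : set 'rV[R]_m) gx y :
  G \in unitmx -> multipliers G df Dg K gx y -> forall d,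
  multipliers G df Dg K gx (y + d) <->
  range_perp Dg d /\ normal_cone K gx (y + d).
Proof.
move=> G_unit [/(gradL_eq0 G_unit) grady0 _] d.
rewrite /multipliers /= (gradL_eq0 G_unit) linearD /= mulmxDr addrA grady0.
by rewrite add0r range_perpE.
Qed.

Section UniqueMultiplier.
Variables (n m : nat) (G : 'M[R]_n) (df : 'cV[R]_n) (Dg : 'M[R]_(n, m)).
Variables (K : set 'rV[R]_m) (gx y : 'rV[R]_m).
Hypotheses (G_unit : G \in unitmx) (M_y : multipliers G df Dg K gx y).

Let shift := multipliers_shift G_unit M_y.

Lemma multipliers_eq1_perp_radial_sub0 :
  multipliers G df Dg K gx = [set y] ->
  range_perp Dg `&` radial_cone (normal_cone K gx) y `<=` [set 0].
Proof.
move=> M_eq d [perp_d [ts ts_gt0 radial]].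
have : [set y] (y + ts *: d).
  rewrite -M_eq; apply/shift; split; first exact: range_perpZ.
  by apply: radial => //; rewrite ltW.
move=> /= /eqP; rewrite -subr_eq0 addrAC subrr add0r scaler_eq0.
by rewrite gt_eqF //= => /eqP.
Qed.

Lemma perp_radial_sub0_multipliers_sub1 :
  range_perp Dg `&` radial_cone (normal_cone K gx) y `<=` [set 0] ->
  multipliers G df Dg K gx `<=` [set y].
Proof.
move=> perp_radial_sub0 z M_z.
have z_shift : z = y + (z - y) by rewrite addrC subrK.
have : (range_perp Dg `&` radial_cone (normal_cone K gx) y) (z - y).
  split; last first.
    exact: convex_radial_cone (normal_cone_convex (u := gx)) M_y.2 M_z.2.
  by move: M_z; rewrite {1}z_shift => /shift [].
by move/perp_radial_sub0 => /= /eqP; rewrite subr_eq0 => /eqP.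
Qed.

End UniqueMultiplier.

End MultiplierSet.

Theorem proposition2 (R : realType) (n m : nat)
  (G : 'M[R]_n) (HGsym : G^T = G)
  (HGpd : forall v : 'rV[R]_n, v != 0 -> 0 < (v *m G *m v^T) 0 0)
  (df : 'cV[R]_n) (Dg : 'M[R]_(n, m))
  (K : set 'rV[R]_m) (HK0 : K !=set0) (HKcl : closed K) (HKcvx : is_convex K)
  (gx : 'rV[R]_m) (Hfeas : K gx)
  (ystar : 'rV[R]_m) (Hystar : multipliers G df Dg K gx ystar) :
  (exists y : 'rV[R]_m, multipliers G df Dg K gx = [set y]) <->
  range_perp Dg `&` radial_cone (normal_cone K gx) ystar = [set 0].
Proof.
have G_unit := posdef_unitmx HGpd.
split=> [[y M_y] | perp_radial_eq0].
- have /= y_eq : [set y] ystar by rewrite -M_y.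
  rewrite -{}y_eq in M_y.
  apply/seteqP; split.
    exact: multipliers_eq1_perp_radial_sub0 G_unit Hystar M_y.
  move=> _ ->; split; first by apply/range_perpE; rewrite trmx0 mulmx0.
  exact/radial_cone0/Hystar.2.
- exists ystar; apply/seteqP; split; last by move=> _ ->.
  by apply: perp_radial_sub0_multipliers_sub1 G_unit Hystar _; rewrite perp_radial_eq0.
Qed.
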